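(* Let $n\ge 2$, let $P=[p_1,\ldots,p_n]\neq[n,n-1,\ldots,1]$ be an arithmetically progressed permutation with ratio $k$, and let $\mathsf{T}_P$ be its associated ternary string (so that $\mathsf{SA}_{\mathsf{T}_P}=P$). Let $t\in[1..n]$ be the index with $p_t=(p_1-1-k)\bmod n$. Then for every $i\in[1..n]$, $\mathsf{BWT}_{\mathsf{T}_P}[i]=\mathsf{T}_P[P[(i+t)\bmod n]]$; that is, $\mathsf{BWT}_{\mathsf{T}_P}$ is the $t$-th cyclic rotation of the string $\mathsf{T}_P[p_1]\mathsf{T}_P[p_2]\cdots\mathsf{T}_P[p_n]$.
   Context: Alphabet $\{\mathtt{a}<\mathtt{b}<\mathtt{c}\}$, lexicographic order with a proper prefix smaller than the longer string; suffix array $\mathsf{SA}_{\mathsf{T}}$: permutation of $[1..n]$ such that $\mathsf{T}[\mathsf{SA}_{\mathsf{T}}[i]..n]$ is the $i$-th smallest suffix. $x\bmod n$ denotes the representative of $x$ modulo $n$ in $[1..n]$. An arithmetically progressed permutation of length $n$ with ratio $k\in[1..n-1]$ is a permutation $P=[p_1,\ldots,p_n]$ of $[1..n]$ with $p_{i+1}=p_i+k\bmod n$. Ternary string associated with $P$: cut $P$ immediately after the entry $n-k$ and immediately after the entry $(p_1-k-1)\bmod n$, giving consecutive possibly empty blocks $A,B,C$ with $P=ABC$; set $\mathsf{T}_P[p_i]=\mathtt{a},\mathtt{b},\mathtt{c}$ according as $p_i$ lies in $A$, $B$, $C$. BWT: $\mathsf{BWT}_{\mathsf{T}}[i]=\mathsf{T}[\mathsf{SA}_{\mathsf{T}}[i]-1\bmod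 n]$. *)

From mathcomp Require Import all_boot.
Set Implicit Arguments. Unset Strict Implicit. Unset Printing Implicit Defensive.

(* Strings over {a<b<c} are encoded as seq nat with a = 0, b = 1, c = 2.
   All positions/indices are 1-based, as in the paper. *)

(* x mod n, represented in [1..n] *)
Definition rep (n x : nat) : nat := if x %% n == 0 then n else x %% n.

Definition at1 (s : seq nat) (i : nat) : nat := nth 0 s i.-1.

Fixpoint lex_lt (s t : seq nat) : bool :=
  match s, t with
  | [::], [::] => false
  | [::], _ :: _ => true
  | _ :: _, [::] => false
  | x :: s', y :: t' => (x < y) || ((x == y) && lex_lt s' t')
  end.

Definition suffix (T : seq nat) (j : nat) : seq nat := drop j.-1 T.

Definition is_SA (T SA : seq nat) : Prop :=
  [/\ size SA = size T, perm_eq SA (iota 1 (size T)) &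
      forall i, 1 <= i < size T ->
        lex_lt (suffix T (at1 SA i)) (suffix T (at1 SA i.+1))].

Definition is_APperm (n k : nat) (P : seq nat) : Prop :=
  [/\ size P = n, perm_eq P (iota 1 n), 1 <= k <= n.-1 &
      forall i, 1 <= i < n -> at1 P i.+1 = rep n (at1 P i + k)].

(* the value (p_1 - k - 1) mod n *)
Definition cutval (n k : nat) (P : seq nat) : nat := rep n (at1 P 1 + 2 * n - k - 1).

(* ternary string associated with P: cut P after the entries n-k and
   (p_1-k-1) mod n (cut positions taken in increasing order), giving blocks
   A B C; T[p_i] = a/b/c according as p_i is in A/B/C. *)
Definition ternary (n k : nat) (P : seq nat) : seq nat :=
  let ja := (index (n - k) P).+1 in
  let jv := (index (cutval n k P) P).+1 in
  mkseq (fun j => let i := (index j.+1 P).+1 in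
                  if i <= minn ja jv then 0
                  else if i <= maxn ja jv then 1 else 2) n.

Definition BWT (T SA : seq nat) : seq nat :=
  mkseq (fun i => at1 T (rep (size T) (at1 SA i.+1 + size T - 1))) (size T).

From Pilot Require Import Defs.
From mathcomp Require Import all_boot zify.

(* 1. Arithmetic of the representative [rep n x] of x modulo n in [1..n].
   2. Lexicographic order: [lex_lt] is a strict order and suffixes are
      determined by their length, hence a string has at most one suffix
      array ([SA_unique]).
   3. Facts on an AP permutation P with ratio k: p_i = p_1 + (i-1)k mod n,
      and the position of (z + k) mod n is the successor of that of z.
   4. The ternary string T: for z <> p_n, T[z..] < T[(z+k) mod n..]
      ([suffix_step_lt], by downward induction on z: both first letters
      sit in consecutive cells of P, a letter increases exactly at the two
      cuts, and otherwise one compares T[z+1..] and T[(z+1+k) mod n..]).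
      Hence P itself is the suffix array of T ([P_is_SA]).
   5. Since p_t = (p_1 - k - 1) mod n, one has t k + 1 = 0 mod n, whence
      (p_i - 1) mod n = p_((i+t) mod n) ([pred_p_shift]); with SA = P this is
      exactly the claimed description of the BWT. *)

Set Implicit Arguments. Unset Strict Implicit. Unset Printing Implicit Defensive.

Lemma rep_range n x : 0 < n -> 1 <= rep n x <= n.
Proof.
move=> n_gt0; rewrite /rep; case: eqP => [_|x_nz]; first by rewrite n_gt0 leqnn.
by rewrite lt0n (introN eqP x_nz) ltnW // ltn_pmod.
Qed.

Lemma rep_mod n x : rep n x %% n = x %% n.
Proof. by rewrite /rep; case: eqP => [->|_]; rewrite ?modnn ?modn_mod. Qed.

Lemma rep_id n x : 1 <= x <= n -> rep n x = x.
Proof.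
case/andP=> x_gt0 x_le; rewrite /rep; case: ltngtP x_le => // [x_lt _|-> _].
  by rewrite modn_small //; case: eqP => // x0; lia.
by rewrite modnn.
Qed.

Lemma rep_inj n x y : 1 <= x <= n -> 1 <= y <= n -> x = y %[mod n] -> x = y.
Proof. by move=> hx hy e; rewrite -(rep_id hx) -(rep_id hy) /rep e. Qed.

Lemma rep_add n z k : 1 <= z <= n -> k < n ->
  rep n (z + k) = if z + k <= n then z + k else z + k - n.
Proof.
move=> hz hk; case: ifP => small; first by apply: rep_id; lia.
have -> : z + k = (z + k - n) + n by lia.
rewrite /rep modnDr modn_small; last lia.
by case: eqP => //; lia.
Qed.

Lemma lex_irr : irreflexive lex_lt.
Proof. by elim=> [|x s IH] //=; rewrite ltnn eqxx IH. Qed.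

Lemma lex_trans : transitive lex_lt.
Proof.
move=> t s u; elim: s t u => [|x s IH] [|y t] [|z u] //=.
case/orP=> [lt_yx|/andP[/eqP-> lt_ts]]; case/orP=> [lt_xz|/andP[/eqP<- lt_su]].
- by rewrite (ltn_trans lt_yx lt_xz).
- by rewrite lt_yx.
- by rewrite lt_xz.
- by rewrite eqxx (IH _ _ lt_ts lt_su) orbT.
Qed.

(* Distinct starting positions give suffixes of distinct lengths. *)
Lemma suffix_inj T a b : 1 <= a <= size T -> 1 <= b <= size T ->
  Defs.suffix T a = Defs.suffix T b -> a = b.
Proof. by move=> ha hb /(congr1 size); rewrite /Defs.suffix !size_drop; lia. Qed.

Lemma SA_sorted T S : is_SA T S -> sorted lex_lt (map (Defs.suffix T) S).
Proof.
case=> sizeS _ incr; apply/(sortedP [::]) => j; rewrite size_map sizeS => hj.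
by rewrite !(nth_map 0) ?sizeS; [apply: incr; lia | lia | lia].
Qed.

Lemma SA_unique T S1 S2 : is_SA T S1 -> is_SA T S2 -> S1 = S2.
Proof.
move=> SA1 SA2; case: (SA1) => size1 perm1 _; case: (SA2) => size2 perm2 _.
have mem_pos S j : perm_eq S (iota 1 (size T)) -> j < size S ->
    1 <= nth 0 S j <= size T.
  by move=> permS hj; rewrite -mem_iota -(perm_mem permS) mem_nth.
have suffixes_eq : map (Defs.suffix T) S1 = map (Defs.suffix T) S2.
  apply: (irr_sorted_eq lex_trans lex_irr); rewrite ?SA_sorted //.
  by apply/perm_mem/perm_map; rewrite (perm_trans perm1) // perm_sym.
apply: (@eq_from_nth _ 0); first by rewrite size1 size2.
move=> j hj; have hj2 : j < size S2 by rewrite size2 -size1.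
have := congr1 (nth [::] ^~ j) suffixes_eq; rewrite !(nth_map 0) //.
by apply: suffix_inj; apply: mem_pos.
Qed.

Lemma rep_addS n z k : 1 <= z < n -> k < n -> z + k != n ->
  rep n (z.+1 + k) = (rep n (z + k)).+1.
Proof.
move=> hz hk zk_ne; have hz1 : 1 <= z.+1 <= n by lia.
have hz' : 1 <= z <= n by lia.
by rewrite (rep_add hz1 hk) (rep_add hz' hk); case: ifP; case: ifP; lia.
Qed.

Section APperm.
Variables (n k : nat) (P : seq nat).
Hypothesis n_ge2 : 2 <= n.
Hypothesis AP : is_APperm n k P.

Lemma size_AP : size P = n. Proof. by case: AP. Qed.

Lemma ratio_bound : 1 <= k < n. Proof. by case: AP => _ _ hk _; lia. Qed.

Lemma mem_AP z : (z \in P) = (1 <= z <= n).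
Proof. by case: AP => _ permP _ _; rewrite (perm_mem permP) mem_iota; lia. Qed.

Lemma uniq_AP : uniq P.
Proof. by case: AP => _ permP _ _; rewrite (perm_uniq permP) iota_uniq. Qed.

Lemma p_range i : 1 <= i <= n -> 1 <= at1 P i <= n.
Proof. by move=> hi; rewrite -mem_AP /at1 mem_nth // size_AP; lia. Qed.

Lemma p_step i : 1 <= i < n -> at1 P i.+1 = rep n (at1 P i + k).
Proof. by case: AP => _ _ _; apply. Qed.

Lemma p_mod i : 1 <= i <= n -> at1 P i = at1 P 1 + (i - 1) * k %[mod n].
Proof.
elim: i => [|i IH] hi; first lia.
case: (posnP i) => [->|i_gt0]; first by rewrite mul0n addn0.
rewrite p_step; last lia.
rewrite rep_mod -modnDml IH; last lia.
by rewrite modnDml -addnA; congr ((_ + _) %% _); rewrite -[in RHS](prednK i_gt0); lia.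
Qed.

Definition pos (z : nat) : nat := (index z P).+1.

Lemma pos_range z : 1 <= z <= n -> 1 <= pos z <= n.
Proof. by rewrite -mem_AP /pos -index_mem size_AP; lia. Qed.

Lemma p_pos z : 1 <= z <= n -> at1 P (pos z) = z.
Proof. by rewrite -mem_AP /pos /at1 /= => hz; rewrite nth_index. Qed.

Lemma pos_p i : 1 <= i <= n -> pos (at1 P i) = i.
Proof. by move=> hi; rewrite /pos /at1 index_uniq ?uniq_AP ?size_AP; lia. Qed.

Lemma pos_inj z y : 1 <= z <= n -> 1 <= y <= n -> pos z = pos y -> z = y.
Proof. by move=> hz hy e; rewrite -(p_pos hz) -(p_pos hy) e. Qed.

Lemma pos_step z : 1 <= z <= n -> pos z < n -> pos (rep n (z + k)) = (pos z).+1.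
Proof.
move=> hz last_lt; have := pos_range hz => hpz.
by rewrite -(p_pos hz) -p_step ?pos_p //; lia.
Qed.

End APperm.

Definition block (ja jv i : nat) : nat :=
  if i <= minn ja jv then 0 else if i <= maxn ja jv then 1 else 2.

Lemma block_cut ja jv i : 1 <= ja -> 1 <= jv -> i = ja \/ i = jv ->
  block ja jv i < block ja jv i.+1.
Proof. by rewrite /block => *; repeat case: ifP; lia. Qed.

Lemma block_flat ja jv i : i <> ja -> i <> jv -> block ja jv i.+1 = block ja jv i.
Proof. by rewrite /block => *; repeat case: ifP; lia. Qed.

Section Ternary.
Variables (n k : nat) (P : seq nat).
Hypothesis n_ge2 : 2 <= n.
Hypothesis AP : is_APperm n k P.

Local Notation T := (ternary n k P).
Local Notation c0 := (cutval n k P).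
Local Notation pos := (pos P).

Lemma size_ternary : size T = n. Proof. exact: size_mkseq. Qed.

Lemma ternary_at z : 1 <= z <= n -> at1 T z = block (pos (n - k)) (pos c0) (pos z).
Proof. by move=> hz; rewrite /at1 nth_mkseq prednK //; lia. Qed.

Lemma cutval_range : 1 <= c0 <= n. Proof. by apply: rep_range; lia. Qed.

Lemma cutval_pred_last z : 1 <= z < n -> z.+1 = at1 P n -> z = c0.
Proof.
move=> hz last_eq; have [k_gt0 k_lt] := andP (ratio_bound n_ge2 AP).
have hp1 := p_range n_ge2 AP (i:=1) ltac:(lia).
apply: (@rep_inj n); [lia | exact: cutval_range |].
apply/eqP; rewrite -(eqn_modDr 1) !addn1 last_eq (p_mod n_ge2 AP); last lia.
rewrite /cutval -[(rep _ _).+1]addn1 -(modnDml (rep n _)) rep_mod modnDml -(eqn_modDr k).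
have -> : at1 P 1 + 2 * n - k - 1 + 1 + k = at1 P 1 + 2 * n by lia.
have -> : at1 P 1 + (n - 1) * k + k = at1 P 1 + k * n.
  by rewrite -addnA -{2}(mul1n k) -mulnDl subnK; lia.
by rewrite !(addnC (at1 P 1)) !modnMDl.
Qed.

Lemma suffix_cons z : 1 <= z <= n -> Defs.suffix T z = at1 T z :: drop z T.
Proof. by move=> hz; rewrite /Defs.suffix (drop_nth 0) ?size_ternary prednK //; lia. Qed.

Lemma suffix_step_reduce z : 1 <= z <= n -> z <> at1 P n ->
  (z < n -> z.+1 <> at1 P n ->
     lex_lt (Defs.suffix T z.+1) (Defs.suffix T (rep n (z.+1 + k)))) ->
  lex_lt (Defs.suffix T z) (Defs.suffix T (rep n (z + k))).
Proof.
move=> hz not_last IH; have [k_gt0 k_lt] := andP (ratio_bound n_ge2 AP).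
have hpz := pos_range n_ge2 AP hz.
have pz_lt : pos z < n.
  rewrite ltn_neqAle (proj2 (andP hpz)) andbT; apply/eqP => pz_eq.
  by apply: not_last; rewrite -pz_eq (p_pos n_ge2 AP).
set w := rep n (z + k); have hw : 1 <= w <= n by apply: rep_range; lia.
have pw : pos w = (pos z).+1 by apply: pos_step.
rewrite (suffix_cons hz) (suffix_cons hw) /= (ternary_at hz) (ternary_at hw) pw.
have [->|z_ne_nk] := eqVneq z (n - k); first by rewrite block_cut //; left.
have [->|z_ne_c0] := eqVneq z c0; first by rewrite block_cut //; right.
rewrite block_flat ?ltnn ?eqxx /=; first last.
- by move/(pos_inj n_ge2 AP hz cutval_range); apply/eqP.
- have hnk : 1 <= n - k <= n by lia.
  by move/(pos_inj n_ge2 AP hz hnk); apply/eqP.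
have [z_eq|z_lt] : z = n \/ z < n by lia.
  have -> : w = k by rewrite /w rep_add //; case: ifP; lia.
  by rewrite z_eq drop_oversize ?size_ternary // (drop_nth 0) ?size_ternary.
have z1_not_last : z.+1 <> at1 P n.
  by move=> e; move/eqP: z_ne_c0; apply; apply: cutval_pred_last => //; lia.
have wS : rep n (z.+1 + k) = w.+1 by apply: rep_addS; lia.
by have := IH z_lt z1_not_last; rewrite wS.
Qed.

Lemma suffix_step_lt z : 1 <= z <= n -> z <> at1 P n ->
  lex_lt (Defs.suffix T z) (Defs.suffix T (rep n (z + k))).
Proof.
move: {2}(n - z) (erefl (n - z)) => m.
elim: m z => [|m IH] z hm hz not_last; apply: suffix_step_reduce => // z_lt.
  by lia.
by move=> z1_not_last; apply: IH => //; lia.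
Qed.

(* Consecutive entries of P are of the form z, (z + k) mod n with z <> p_n. *)
Lemma P_is_SA : is_SA T P.
Proof.
case: (AP) => sizeP permP _ _; split; rewrite ?size_ternary //.
move=> i hi; rewrite (p_step AP) //; apply: suffix_step_lt.
  by apply: (p_range n_ge2 AP); lia.
move=> e; have := pos_p n_ge2 AP (i:=i) ltac:(lia).
by rewrite e (pos_p n_ge2 AP); lia.
Qed.

Lemma pred_p_shift i t : 1 <= i <= n -> 1 <= t <= n -> at1 P t = c0 ->
  rep n (at1 P i + n - 1) = at1 P (rep n (i + t)).
Proof.
move=> hi ht pt_eq; have [k_gt0 k_lt] := andP (ratio_bound n_ge2 AP).
set r := rep n (i + t); have hr : 1 <= r <= n by apply: rep_range; lia.
have hpi := p_range n_ge2 AP hi; have hpr := p_range n_ge2 AP hr.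
have hp1 := p_range n_ge2 AP (i:=1) ltac:(lia).
have tk1 : (t * k + 1) %% n = 0.
  move: pt_eq => /(congr1 (modn^~ n)); rewrite rep_mod (p_mod n_ge2 AP) //.
  move/eqP; rewrite -(eqn_modDr (k + 1)).
  have -> : at1 P 1 + (t - 1) * k + (k + 1) = at1 P 1 + (t * k + 1) by nia.
  have -> : at1 P 1 + 2 * n - k - 1 + (k + 1) = at1 P 1 + n * 2 by lia.
  by rewrite eqn_modDl modnMr => /eqP.
apply: (@rep_inj n); [by apply: rep_range; lia | by [] |].
rewrite rep_mod; apply/eqP; rewrite -(eqn_modDr 1).
have -> : at1 P i + n - 1 + 1 = at1 P i + n by lia.
rewrite modnDr (p_mod n_ge2 AP hi) -(modnDml (at1 P r)) (p_mod n_ge2 AP hr).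
rewrite modnDml -addnA eqn_modDl -(eqn_modDr k).
have -> : (i - 1) * k + k = i * k by nia.
have -> : (r - 1) * k + 1 + k = r * k + 1 by nia.
by rewrite -modnDml -(modnMml r) /r rep_mod modnMml modnDml mulnDl -addnA -modnDmr tk1 addn0.
Qed.

End Ternary.

(* By uniqueness of suffix arrays SA = P, and the BWT entry at i is
   T[(p_i - 1) mod n] = T[p_((i+t) mod n)]. *)
Theorem lemma5 (n k : nat) (P SA : seq nat) :
  2 <= n ->
  is_APperm n k P ->
  P <> rev (iota 1 n) ->
  is_SA (ternary n k P) SA ->
  forall t, 1 <= t <= n -> at1 P t = cutval n k P ->
  forall i, 1 <= i <= n ->
    at1 (BWT (ternary n k P) SA) i = at1 (ternary n k P) (at1 P (rep n (i + t))).
Proof.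
move=> n_ge2 AP _ isSA t ht pt_eq i hi.
have -> : SA = P by apply: (SA_unique isSA); apply: P_is_SA.
rewrite /BWT /at1 nth_mkseq size_ternary; last lia.
by rewrite (pred_p_shift n_ge2 AP hi ht pt_eq).
Qed.
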